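(* Let $d$ be a positive integer. There exists a matrix $A\in\mathbb{R}^{[4]\times[3]}$ such that (i) $A$ does not have an elimination ordering, and (ii) for every vector $b\in\mathbb{R}^{[4]}$ the solution graph $G(R(A,b))$ is connected.
   Context: Fix a positive integer $d$ and let $D=\{0,1,\dots,d\}$; $[n]=\{1,\dots,n\}$. For $A\in\mathbb{R}^{[m]\times[n]}$ and $b\in\mathbb{R}^{[m]}$, $R(A,b)=\{x\in D^{[n]} : Ax\ge b\}$. For $R\subseteq D^{[n]}$, the solution graph $G(R)$ is the undirected graph with vertex set $R$ in which $x,y$ are adjacent iff they differ in exactly one coordinate. A matrix $A=(a_{ij})$ with column index set $J$ can be eliminated at column $j\in J$ if (i) for every row $i$ with $a_{ij}>0$ we have $a_{ij'}=0$ for all $j'\in J\setminus\{j\}$, or (ii) for every row $i$ with $a_{ij}<0$ we have $a_{ij'}=0$ for all $j'\in J\setminus\{j\}$. For $J'\subseteq[n]$, $\mathrm{elm}(A,J')$ is the submatrix of $A$ obtained by deleting the columns indexed by $J'$. A sequence $(j_1,\dots,j_n)$ of the elements of $[n]$ is an elimination ordering (EO) of $A$ if for every $t\in[n]$ the matrix $\mathrm{elm}(A,\{j_1,\dots,j_{t-1}\})$ can be eliminated at column $j_t$. *)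

From HB Require Import structures.
From mathcomp Require Import all_boot all_order all_algebra.
From mathcomp Require Import Rstruct.
Set Implicit Arguments. Unset Strict Implicit. Unset Printing Implicit Defensive.
Import Order.TTheory GRing.Theory Num.Theory.
Local Open Scope ring_scope.

(* D^[n] with D = {0,...,d}: points are finite functions 'I_n -> 'I_d.+1. *)
Definition point (d n : nat) := {ffun 'I_n -> 'I_d.+1}.

Section Defs.
Variable R : numDomainType.

Definition vec_of (d n : nat) (x : point d n) : 'cV[R]_n :=
  \col_j ((nat_of_ord (x j))%:R).

Definition in_sol (d m n : nat) (A : 'M[R]_(m, n)) (b : 'cV[R]_m)
  (x : point d n) : bool :=
  [forall i : 'I_m, b i 0 <= (A *m vec_of x) i 0].

Definition adj1 (d n : nat) (x y : point d n) : bool :=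
  #|[set j : 'I_n | x j != y j]| == 1%N.

Definition sol_edge (d m n : nat) (A : 'M[R]_(m, n)) (b : 'cV[R]_m) :
  rel (point d n) :=
  fun x y => [&& in_sol A b x, in_sol A b y & adj1 x y].

Definition sol_graph_connected (d m n : nat) (A : 'M[R]_(m, n))
  (b : 'cV[R]_m) : Prop :=
  forall x y : point d n, in_sol A b x -> in_sol A b y ->
    connect (sol_edge A b) x y.

Definition can_elim (m n : nat) (A : 'M[R]_(m, n)) (J : {set 'I_n})
  (j : 'I_n) : Prop :=
  (forall i : 'I_m, 0 < A i j ->
     forall j' : 'I_n, j' \in J -> j' != j -> A i j' = 0) \/
  (forall i : 'I_m, A i j < 0 ->
     forall j' : 'I_n, j' \in J -> j' != j -> A i j' = 0).

Definition is_EO (m n : nat) (A : 'M[R]_(m, n)) (s : seq 'I_n) : Prop :=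
  perm_eq s (enum 'I_n) /\
  (* t ranges over 0..n-1; the default element of nth is irrelevant
     since size s = n *)
  forall t : 'I_n,
    can_elim A [set j | j \notin take t s] (nth t s t).

Definition has_EO (m n : nat) (A : 'M[R]_(m, n)) : Prop :=
  exists s : seq 'I_n, is_EO A s.
End Defs.
Arguments sol_graph_connected {R} d {m n} A b.

From Pilot Require Import Defs.
From mathcomp Require Import all_boot all_order all_algebra.
From mathcomp Require Import Rstruct.
From mathcomp Require Import lra.
Set Implicit Arguments. Unset Strict Implicit. Unset Printing Implicit Defensive.
Import Order.TTheory GRing.Theory Num.Theory.
Local Open Scope ring_scope.

(* Every column has a positive and a negative entry, each in a row that meets
   another column, so no column can be eliminated first.  For fixed x0 the
   feasible x1 form [b1 + x0, -b0 - x0], which shrinks as x0 grows, and the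
   feasible x2 form [b3 - x0, x0 - b2], which grows; so two solutions with
   x0 <= y0 are joined by moving x1, then x0, then x2, one coordinate at a time. *)

Section ElimOrdering.
Variable R : numDomainType.

Lemma has_EO_can_elimT m n (A : 'M[R]_(m, n.+1)) :
  has_EO A -> exists j, can_elim A setT j.
Proof.
case=> s [_ /(_ ord0)]; rewrite take0 => elim_head.
by exists (nth ord0 s 0).
Qed.

Lemma not_can_elimT m n (A : 'M[R]_(m, n)) (j : 'I_n) (i i' : 'I_m) (k k' : 'I_n) :
  0 < A i j -> k != j -> A i k != 0 ->
  A i' j < 0 -> k' != j -> A i' k' != 0 ->
  ~ can_elim A setT j.
Proof.
move=> Aij_gt0 kj /eqP Aik_neq0 Ai'j_lt0 k'j /eqP Ai'k'_neq0.
by case=> elim_j; [apply: Aik_neq0 | apply: Ai'k'_neq0]; apply: elim_j; rewrite ?inE.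
Qed.

End ElimOrdering.

Section SolutionGraph.
Variables (R : numDomainType) (d m n : nat) (A : 'M[R]_(m, n)) (b : 'cV[R]_m).

Lemma sol_edge_sym : symmetric (sol_edge (d := d) A b).
Proof.
move=> x y; rewrite /sol_edge /Defs.adj1 andbCA.
have -> : [set j | x j != y j] = [set j | y j != x j].
  by apply/setP => j; rewrite !inE eq_sym.
by [].
Qed.

Lemma adj1_of_agree_off (x y : point d n) (j : 'I_n) :
  x != y -> (forall k, k != j -> x k = y k) -> Defs.adj1 x y.
Proof.
move=> x_neq_y agree; rewrite /Defs.adj1.
suff -> : [set k | x k != y k] = [set j] by rewrite cards1.
apply/setP => k; rewrite !inE; have [-> | kj] := eqVneq k j; last first.
  by rewrite agree ?eqxx.
apply: contra_neq x_neq_y => xj_eq_yj; apply/ffunP => i.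
by have [-> | ij] := eqVneq i j; last exact: agree.
Qed.

Lemma connect_agree_off (x y : point d n) (j : 'I_n) :
  in_sol A b x -> in_sol A b y -> (forall k, k != j -> x k = y k) ->
  connect (sol_edge A b) x y.
Proof.
move=> sol_x sol_y agree; have [-> | x_neq_y] := eqVneq x y; first exact: connect0.
by apply: connect1; rewrite /sol_edge sol_x sol_y (adj1_of_agree_off x_neq_y agree).
Qed.

End SolutionGraph.

Definition set_coord d n (x : point d n) (j : 'I_n) (v : 'I_d.+1) : point d n :=
  [ffun k => if k == j then v else x k].

Lemma set_coord_same d n (x : point d n) j v : set_coord x j v j = v.
Proof. by rewrite ffunE eqxx. Qed.

Lemma set_coord_other d n (x : point d n) j v k : k != j -> set_coord x j v k = x k.
Proof. by rewrite ffunE => /negbTE ->. Qed.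

Lemma mulmx_vec_ofE (R : numDomainType) d m n (A : 'M[R]_(m, n)) (x : point d n) i :
  (A *m vec_of R x) i 0 = \sum_j A i j * (x j)%:R.
Proof. by rewrite mxE; apply: eq_bigr => j _; rewrite mxE. Qed.

Local Notation c0 := (@Ordinal 3 0 isT).
Local Notation c1 := (@Ordinal 3 1 isT).
Local Notation c2 := (@Ordinal 3 2 isT).
Local Notation r0 := (@Ordinal 4 0 isT).
Local Notation r1 := (@Ordinal 4 1 isT).
Local Notation r2 := (@Ordinal 4 2 isT).
Local Notation r3 := (@Ordinal 4 3 isT).

Lemma sum_ord3 (V : nmodType) (F : 'I_3 -> V) : \sum_j F j = F c0 + F c1 + F c2.
Proof.
by rewrite !big_ord_recl big_ord0 addr0 addrA; congr (F _ + F _ + F _); apply: val_inj.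
Qed.

Lemma forall_ord4 (P : pred 'I_4) : [forall i, P i] = [&& P r0, P r1, P r2 & P r3].
Proof.
apply/forallP/and4P => [P_all | [P0 P1 P2 P3] [[|[|[|[|i]]]] lt_i4]] //;
  by rewrite (bool_irrelevance lt_i4 isT).
Qed.

Section Example.
Variable R : realFieldType.

Definition A_noEO : 'M[R]_(4, 3) :=
  \matrix_(i, j) (nth [::] [:: [:: -1; -1;  0];
                              [:: -1;  1;  0];
                              [::  1;  0; -1];
                              [::  1;  0;  1]] i)`_j.

Lemma A_noEO_not_has_EO : ~ has_EO A_noEO.
Proof.
case/has_EO_can_elimT => -[[|[|[|j]]] lt_j3] //; rewrite (bool_irrelevance lt_j3 isT).
- by apply: (not_can_elimT (i := r2) (i' := r0) (k := c2) (k' := c1));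
    rewrite // mxE /= ?ltr01 ?oppr_lt0 ?oppr_eq0 ?oner_eq0.
- by apply: (not_can_elimT (i := r1) (i' := r0) (k := c0) (k' := c0));
    rewrite // mxE /= ?ltr01 ?oppr_lt0 ?oppr_eq0 ?oner_eq0.
- by apply: (not_can_elimT (i := r3) (i' := r2) (k := c0) (k' := c0));
    rewrite // mxE /= ?ltr01 ?oppr_lt0 ?oppr_eq0 ?oner_eq0.
Qed.

Lemma in_sol_A_noEO d b (x : point d 3) :
  in_sol A_noEO b x =
  [&& b r0 0 <= - (x c0)%:R - (x c1)%:R, b r1 0 <= - (x c0)%:R + (x c1)%:R,
      b r2 0 <= (x c0)%:R - (x c2)%:R & b r3 0 <= (x c0)%:R + (x c2)%:R].
Proof.
by rewrite /in_sol forall_ord4 !mulmx_vec_ofE !sum_ord3 !mxE /= !mul1r !mulN1r !mul0r !addr0.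
Qed.

Lemma connect_A_noEO_of_le d b (x y : point d 3) :
  in_sol A_noEO b x -> in_sol A_noEO b y -> (x c0 <= y c0)%N ->
  connect (sol_edge A_noEO b) x y.
Proof.
move=> sol_x sol_y le_xy0.
pose z1 := set_coord x c1 (y c1); pose z2 := set_coord z1 c0 (y c0).
have [sol_z1 sol_z2] : in_sol A_noEO b z1 /\ in_sol A_noEO b z2.
  move: sol_x sol_y le_xy0; rewrite -(ler_nat R) !in_sol_A_noEO /z2 /z1.
  rewrite !ffunE /= => /and4P[? ? ? ?] /and4P[? ? ? ?] ?.
  by split; apply/and4P; split; lra.
apply: (connect_trans (y := z1)).
  by apply: (connect_agree_off (j := c1)) => // k k_neq; rewrite /z1 set_coord_other.
apply: (connect_trans (y := z2)).
  by apply: (connect_agree_off (j := c0)) => // k k_neq; rewrite /z2 set_coord_other.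
apply: (connect_agree_off (j := c2)) => // -[[|[|[|k]]] lt_k3] //;
  rewrite (bool_irrelevance lt_k3 isT) /z2 => _.
- by rewrite set_coord_same.
- by rewrite set_coord_other // set_coord_same.
Qed.

Lemma A_noEO_connected d b : sol_graph_connected d A_noEO b.
Proof.
move=> x y sol_x sol_y.
have [le_xy0 | /ltnW le_yx0] := leqP (x c0) (y c0); first exact: connect_A_noEO_of_le.
by rewrite (sym_connect_sym (sol_edge_sym _ _)) connect_A_noEO_of_le.
Qed.

End Example.

Theorem lemma1 (d : nat) (hd : (0 < d)%N) :
  exists A : 'M[Rdefinitions.R]_(4, 3),
    ~ has_EO A /\
    forall b : 'cV[Rdefinitions.R]_4, sol_graph_connected d A b.
Proof.
exists (A_noEO Rdefinitions.R).
exact: (conj (@A_noEO_not_has_EO _) (@A_noEO_connected _ d)).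
Qed.
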